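(* For every non-decreasing function $f:(0,1)\to(0,1)$ there is a non-decreasing function $f':(0,1)\to(0,1)$ with $f'(x)<f(x)$ for all $x\in(0,1)$ such that the following holds. Let $\rho,\nu,\tau,\alpha\in(0,1)$ and $n,k,\ell\in\mathbb N$ satisfy $1/n\leq\rho\leq f'(\nu)$, $\nu\leq\tau\leq f'(\alpha)$. Then there exist $\zeta,\delta,\gamma,\beta,\eta$ with $\rho\leq f(\eta)$, $\eta\leq f(\beta)$, $\beta\leq f(\gamma)$, $\gamma\leq f(\zeta)$, $\zeta\leq f(\nu)$ and $\tau<\delta<\alpha$, such that for every $n$-vertex $D$-regular graph $G$ with $D\geq\alpha n$, every robust partition $\mathcal V$ of $G$ with parameters $\rho,\nu,\tau,k,\ell$ is a clustering of $G$ with parameters $\zeta,\delta,\gamma,\beta,\eta$ (with $c_{\min}=\alpha$, where for each bipartite part $W_j$ its bipartition $A_j,B_j$ serves as the partition witnessing that $W_j$ is $\beta$-almost-bipartite, and each part $V_i$ is $\gamma$-far-from-bipartite).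
   Context: For a graph $G$ and $S,T\subseteq V(G)$: $\overline{S}=V(G)\setminus S$; $d_S(v)=|N(v)\cap S|$; $E_G(S,T)=\{xy\in E(G):x\in S,y\in T\}$, $e_G(S,T)=|E_G(S,T)|$. For an $N$-vertex graph $H$, $\mathrm{RN}_{\nu,H}(S)=\{v:d_S(v)\ge\nu N\}$; $H$ is a robust $(\nu,\tau)$-expander if $|\mathrm{RN}_{\nu,H}(S)|\ge|S|+\nu N$ for all $S$ with $\tau N\le|S|\le(1-\tau)N$; $H$ is a bipartite robust $(\nu,\tau)$-expander with bipartition $A,B$ if this inequality holds for all $S\subseteq A$ with $\tau|A|\le|S|\le(1-\tau)|A|$. $\mathcal V=\{V_1,\dots,V_k,W_1,\dots,W_\ell\}$ is a robust partition of an $n$-vertex $D$-regular $G$ with parameters $\rho,\nu,\tau,k,\ell$ ($0<\rho\le\nu\le\tau<1$) if: (D1) it partitions $V(G)$; (D2) each $V_i$ satisfies $|V_i|\ge\sqrt\rho n$, $e_G(V_i,\overline{V_i})\le\rho n^2$ and $G[V_i]$ is a robust $(\nu,\tau)$-expander; (D3) each $W_j$ has a partition $A_j,B_j$ with $|A_j|,|B_j|\ge\sqrt\rho n$, $||A_j|-|B_j||\le\rho n$, $e_G(A_j,\overline{B_j})+e_G(B_j,\overline{A_j})\le\rho n^2$ and $G[W_j]$ a bipartite robust $(\nu,\tau)$-expander with bipartition $A_j,B_j$; (D4) $d_X(x)\ge d_{X'}(x)$ for all $X,X'\in\mathcal V$, $x\in X$; (D5) $d_{B_j}(u)\ge d_{A_j}(u)$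 for $u\in A_j$, $d_{A_j}(v)\ge d_{B_j}(v)$ for $v\in B_j$; (D6) $k+2\ell\le\lfloor(1+\rho^{1/3})n/D\rfloor$; (D7) each $X\in\mathcal V$ has all but at most $\rho n$ vertices with $d_X(x)\ge D-\rho n$. Clustering: a cut of $A\subseteq V(G)$ is a partition $X,Y$ of $A$ into non-empty sets; it is $\zeta$-sparse if $e_G(X,Y)\le\zeta|X||Y|$. $A$ is $\beta$-almost-bipartite if there is a partition $X,Y$ of $A$ such that $G[A]$ has at most $\beta n^2$ edges not in $E_G(X,Y)$; otherwise $A$ is $\beta$-far-from-bipartite. For $c_{\min}\in(0,1)$ and $G$ an $n$-vertex $D$-regular graph with $D\ge c_{\min}n$, a clustering of $G$ with parameters $\zeta,\delta,\gamma,\beta,\eta$ is a partition $\{A_1,\dots,A_r\}$ of $V(G)$ into non-empty sets such that: (a) at most $\eta n^2$ edges of $G$ have ends in different $A_i$; (b) $\delta(G[A_i])\ge\delta n$ for each $i$; (c) no $A_i$ has a $\zeta$-sparse cut; (d) each $A_i$ is either $\beta$-almost-bipartite (with a specified witnessing partition) or $\gamma$-far-from-bipartite. *)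

From HB Require Import structures.
From mathcomp Require Import all_boot all_order all_algebra.
From mathcomp Require Import all_classical all_reals all_analysis.
Set Implicit Arguments. Unset Strict Implicit. Unset Printing Implicit Defensive.
Import Order.TTheory GRing.Theory Num.Theory.
Local Open Scope ring_scope.

Definition simple_graph (T : finType) (e : rel T) : Prop :=
  symmetric e /\ irreflexive e.

Section Graphs.
Variables (T : finType) (e : rel T).

Definition deg_in (S : {set T}) (v : T) : nat := #|[set u in S | e v u]|.

Definition regular (D : nat) : Prop := forall v : T, deg_in [set: T] v = D.

Definition Eset (S U : {set T}) : {set {set T}} :=
  [set p : {set T} | [exists x : T, exists y : T,
     [&& p == [set x; y], e x y, x \in S & y \in U]]].

Definition eG (S U : {set T}) : nat := #|Eset S U|.

Variable R : realType.

Definition RN (Hs : {set T}) (nu : R) (S : {set T}) : {set T} :=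
  [set v in Hs | nu * #|Hs|%:R <= (deg_in S v)%:R].

Definition robust_expander (Hs : {set T}) (nu tau : R) : Prop :=
  forall S : {set T}, S \subset Hs ->
    tau * #|Hs|%:R <= #|S|%:R -> #|S|%:R <= (1 - tau) * #|Hs|%:R ->
    #|S|%:R + nu * #|Hs|%:R <= #|RN Hs nu S|%:R.

Definition bip_robust_expander (A B : {set T}) (nu tau : R) : Prop :=
  forall S : {set T}, S \subset A ->
    tau * #|A|%:R <= #|S|%:R -> #|S|%:R <= (1 - tau) * #|A|%:R ->
    #|S|%:R + nu * #|A :|: B|%:R <= #|RN (A :|: B) nu S|%:R.

Definition rp_part (k l : nat) (Vs : 'I_k -> {set T}) (As Bs : 'I_l -> {set T})
  (p : 'I_k + 'I_l) : {set T} :=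
  match p with inl i => Vs i | inr j => As j :|: Bs j end.

Definition robust_partition (n D : nat) (rho nu tau : R) (k l : nat)
  (Vs : 'I_k -> {set T}) (As Bs : 'I_l -> {set T}) : Prop :=
  let P := rp_part Vs As Bs in
  let nr := (n%:R : R) in
  (0 < rho /\ rho <= nu /\ nu <= tau /\ tau < 1) /\
   (* (D1) *)
   ((forall p q, p != q -> [disjoint P p & P q]) /\
     (forall x : T, exists p, x \in P p)) /\
   (* (D2) *)
   (forall i : 'I_k,
      [/\ Num.sqrt rho * nr <= #|Vs i|%:R,
          (eG (Vs i) (~: Vs i))%:R <= rho * nr ^+ 2
        & robust_expander (Vs i) nu tau]) /\
   (* (D3) *)
   (forall j : 'I_l,
      [/\ [disjoint As j & Bs j],
          Num.sqrt rho * nr <= #|As j|%:R /\ Num.sqrt rho * nr <= #|Bs j|%:R,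
          `|#|As j|%:R - #|Bs j|%:R| <= rho * nr,
          (eG (As j) (~: Bs j) + eG (Bs j) (~: As j))%:R <= rho * nr ^+ 2
        & bip_robust_expander (As j) (Bs j) nu tau]) /\
   (* (D4) *)
   (forall p q (x : T), x \in P p -> (deg_in (P q) x <= deg_in (P p) x)%N) /\
   (* (D5) *)
   (forall j : 'I_l,
      (forall u, u \in As j -> (deg_in (As j) u <= deg_in (Bs j) u)%N) /\
      (forall v, v \in Bs j -> (deg_in (Bs j) v <= deg_in (As j) v)%N)) /\
   (* (D6) *)
   ((k + 2 * l)%:~R <=
      (Num.floor ((1 + powR rho (3%:R^-1)) * nr / D%:R))%:~R :> R) /\
   (* (D7) *)
   (forall p, (#|[set x in P p | ~~ (D%:R - rho * nr <= (deg_in (P p) x)%:R)]|%:R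
               <= rho * nr)).

Definition is_cut (Af X Y : {set T}) : Prop :=
  [/\ X :|: Y = Af, [disjoint X & Y], X != finset.set0 & Y != finset.set0].

Definition sparse_cut (zeta : R) (X Y : {set T}) : Prop :=
  (eG X Y)%:R <= zeta * #|X|%:R * #|Y|%:R.

Definition bipartition (Af X Y : {set T}) : Prop :=
  X :|: Y = Af /\ [disjoint X & Y].

Definition non_cross_edges (Af X Y : {set T}) : nat :=
  #|Eset Af Af :\: Eset X Y|.

Definition almost_bipartite_with (n : nat) (beta : R) (Af X Y : {set T}) : Prop :=
  bipartition Af X Y /\ (non_cross_edges Af X Y)%:R <= beta * (n%:R) ^+ 2.

Definition far_from_bipartite (n : nat) (gamma : R) (Af : {set T}) : Prop :=
  forall X Y, bipartition Af X Y -> gamma * (n%:R) ^+ 2 < (non_cross_edges Af X Y)%:R.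

Definition cross_part_edges (I : finType) (P : I -> {set T}) : nat :=
  #|[set p : {set T} | [exists x : T, exists y : T,
      [&& p == [set x; y], e x y & [forall i, ~~ ((x \in P i) && (y \in P i))]]]]|.

(* Clustering of the n-vertex D-regular graph G with D >= cmin n, with
   parameters zeta,delta,gamma,beta,eta; spec i = Some (X,Y) means part i is
   declared beta-almost-bipartite witnessed by X,Y; None means it is declared
   gamma-far-from-bipartite. *)
Definition clustering (n D : nat) (cmin : R) (I : finType) (P : I -> {set T})
  (spec : I -> option ({set T} * {set T}))
  (zeta delta gamma beta eta : R) : Prop :=
  cmin * n%:R <= D%:R /\
      ((forall i j, i != j -> [disjoint P i & P j]) /\
        (forall x : T, exists i, x \in P i) /\ (forall i, P i != finset.set0)) /\
      (* (a) *) (cross_part_edges P)%:R <= eta * (n%:R) ^+ 2 /\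
      (* (b) *) (forall i x, x \in P i -> delta * n%:R <= (deg_in (P i) x)%:R) /\
      (* (c) *) (forall i X Y, is_cut (P i) X Y -> ~ sparse_cut zeta X Y) /\
      (* (d) *) (forall i, match spec i with
                 | Some (X, Y) => almost_bipartite_with n beta (P i) X Y
                 | None => far_from_bipartite n gamma (P i)
                 end).

End Graphs.

Definition rp_spec (T : finType) (k l : nat) (As Bs : 'I_l -> {set T})
  (p : 'I_k + 'I_l) : option ({set T} * {set T}) :=
  match p with inl _ => None | inr j => Some (As j, Bs j) end.

Definition in01 (R : realType) (x : R) : Prop := 0 < x < 1.

(* f : (0,1) -> (0,1) non-decreasing (f represented as a function R -> R,
   only its values on (0,1) matter) *)
Definition unit_nondecr (R : realType) (f : R -> R) : Prop :=
  (forall x, in01 x -> in01 (f x)) /\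
  (forall x y, in01 x -> in01 y -> x <= y -> f x <= f y).

(* The graph-theoretic core is robust_partition_is_clustering: under explicit
   polynomial relations between rho, nu, tau, alpha and the clustering
   parameters (the record clustering_params), every robust partition of an
   n-vertex D-regular graph with D >= alpha n is a clustering:
   (a) an edge between two parts leaves the part of one end, so (D2), (D3)
       bound such edges by (k + l) rho n^2, and (D6) gives k + l <= 2 / alpha;
   (b) regularity, (D4) and (D6) give minimum degree alpha^2 n / 2 in each part;
   (c) a cut with a side of size at most delta n / 2 is dense by the minimum
       degree; a cut with two large sides is dense by (bipartite) robust
       expansion, using (D3) and (D5) for the bipartite parts;
   (d) the parts V_i are far from bipartite by the same two arguments, and
       the bipartitions A_j, B_j are almost bipartite by (D3).  Finally f' and the parameters
   zeta, gamma, beta, eta (functions of nu) and delta = alpha^2 / 2 are built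
   from f and small powers of nu so that both the chain rho <= f eta <= ... and
   clustering_params hold, which yields the theorem. *)

From HB Require Import structures.
From mathcomp Require Import all_boot all_order all_algebra.
From mathcomp Require Import all_classical all_reals all_analysis.
From mathcomp Require Import lra ring.
(* Give the finite-set names (subsetP, setX, ...) priority over the classical ones. *)
From mathcomp Require Import fintype finset.
From mathcomp Require Import unstable.
Import Order.TTheory GRing.Theory Num.Theory.
Set Implicit Arguments. Unset Strict Implicit. Unset Printing Implicit Defensive.
Local Open Scope ring_scope.

Section EdgeCounting.
Variables (T : finType) (e : rel T).
Hypothesis esym : symmetric e.

(* Ordered edges (y, x) with y in Y and x in X: counting them by their first
   coordinate gives degree sums, forgetting the order gives E_G(X, Y). *)
Definition arcs (X Y : {set T}) : {set T * T} :=
  [set p | (p.1 \in Y) && ((p.2 \in X) && e p.1 p.2)].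

Lemma card_arcs (X Y : {set T}) : #|arcs X Y| = (\sum_(y in Y) deg_in e X y)%N.
Proof.
rewrite -sum1dep_card -(pair_big_dep (mem Y) (fun y x => (x \in X) && e y x)
  (fun _ _ => 1%N)) /=.
by apply: eq_bigr => y _; rewrite sum1dep_card /deg_in; apply: eq_card => x; rewrite !inE.
Qed.

Lemma Eset_arcs (X Y : {set T}) :
  Eset e X Y = [set [set p.2; p.1] | p in arcs X Y].
Proof.
apply/setP => s; rewrite inE; apply/idP/imsetP.
- case/existsP => x /existsP [y /and4P [/eqP -> exy xX yY]].
  by exists (y, x); rewrite // inE /= yY xX esym.
- case=> [[y x]]; rewrite inE /= => /and3P [yY xX eyx] ->.
  by apply/existsP; exists x; apply/existsP; exists y; rewrite eqxx xX yY esym eyx.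
Qed.

(* Between disjoint sets every edge is counted exactly once by degrees. *)
Lemma eG_disjoint (X Y : {set T}) :
  [disjoint X & Y] -> eG e X Y = (\sum_(y in Y) deg_in e X y)%N.
Proof.
move=> dXY; rewrite -card_arcs /eG Eset_arcs card_in_imset //.
move=> [y x] [y' x']; rewrite !inE /= => /and3P [yY xX _] /and3P [yY' xX' _] h.
have /set2P hy : y \in [set x'; y'] by rewrite -h !inE eqxx orbT.
have /set2P hx : x \in [set x'; y'] by rewrite -h !inE eqxx.
have Fl z : z \in X -> z \in Y -> False by move=> zX; rewrite (disjointFr dXY zX).
case: hy hx => [yx'|->] [xx'|xy'].
- by case: (Fl x); rewrite // xx' -yx'.
- by case: (Fl y); rewrite // yx'.
- by rewrite xx'.
- by case: (Fl x); rewrite // xy'.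
Qed.

(* Inside a single set each edge is seen from both of its ends. *)
Lemma sum_deg_self (S : {set T}) :
  irreflexive e -> (\sum_(v in S) deg_in e S v <= 2 * eG e S S)%N.
Proof.
move=> eirr; rewrite -card_arcs.
pose psi (p : T * T) := ([set p.2; p.1], (enum_rank p.1 < enum_rank p.2)%N).
have psi_inj : {in arcs S S &, injective psi}.
  move=> [a b] [c d]; rewrite !inE /= => /and3P [_ _ eab] /and3P [_ _ _] [h hr].
  have ab : a != b by apply: contraTneq eab => ->; rewrite eirr.
  have /set2P [ad|ac] : a \in [set d; c] by rewrite -h !inE eqxx orbT.
  + have /set2P [bd|bc] : b \in [set d; c] by rewrite -h !inE eqxx.
      by move: ab; rewrite ad bd eqxx.
    move: hr; rewrite ad bc; case: (ltngtP (enum_rank d) (enum_rank c)) => //.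
    by move=> /val_inj/enum_rank_inj dc _; move: ab; rewrite ad bc dc eqxx.
  + have /set2P [-> //|bc] : b \in [set d; c] by rewrite -h !inE eqxx.
      by rewrite ac.
    by move: ab; rewrite ac bc eqxx.
rewrite -(card_in_imset psi_inj).
have sub : psi @: arcs S S \subset setX (Eset e S S) [set: bool].
  apply/subsetP => _ /imsetP [p pS ->]; rewrite in_setX in_setT andbT Eset_arcs.
  exact: imset_f.
by apply: (leq_trans (subset_leq_card sub)); rewrite cardsX cardsT card_bool mulnC.
Qed.

Lemma Eset_sym (X Y : {set T}) : Eset e X Y = Eset e Y X.
Proof.
apply/setP => s; rewrite !inE.
by apply/existsP/existsP => -[x /existsP [y /and4P [/eqP -> exy xX yY]]];
  exists y; apply/existsP; exists x; rewrite setUC eqxx esym exy xX yY.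
Qed.

Lemma eG_sym (X Y : {set T}) : eG e X Y = eG e Y X.
Proof. by rewrite /eG Eset_sym. Qed.

Lemma Eset_mono (X Y X' Y' : {set T}) : X \subset X' -> Y \subset Y' ->
  Eset e X Y \subset Eset e X' Y'.
Proof.
move=> sX sY; apply/subsetP => s; rewrite !inE.
case/existsP => x /existsP [y /and4P [h exy xX yY]].
by apply/existsP; exists x; apply/existsP; exists y;
  rewrite h exy (subsetP sX _ xX) (subsetP sY _ yY).
Qed.

Lemma deg_in_le_card (S : {set T}) (v : T) : (deg_in e S v <= #|S|)%N.
Proof. by apply/subset_leq_card/subsetP => u; rewrite inE => /andP []. Qed.

Lemma deg_in_mono (S S' : {set T}) (v : T) :
  S \subset S' -> (deg_in e S v <= deg_in e S' v)%N.
Proof.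
move=> sS; apply/subset_leq_card/subsetP => u; rewrite !inE => /andP [uS ->].
by rewrite (subsetP sS _ uS).
Qed.

Lemma card_setU_disjoint (S1 S2 : {set T}) :
  [disjoint S1 & S2] -> #|S1 :|: S2| = (#|S1| + #|S2|)%N.
Proof. by move=> d; apply/eqP; rewrite (leq_card_setU S1 S2).2. Qed.

Lemma deg_in_setU (S1 S2 : {set T}) (v : T) : [disjoint S1 & S2] ->
  deg_in e (S1 :|: S2) v = (deg_in e S1 v + deg_in e S2 v)%N.
Proof.
move=> d; rewrite /deg_in -card_setU_disjoint; last first.
  by apply: disjointW d; apply/subsetP => u; rewrite inE => /andP [].
by apply: eq_card => u; rewrite !inE andb_orl.
Qed.

Lemma setI_split (S X Y : {set T}) : S \subset X :|: Y -> (S :&: X) :|: (S :&: Y) = S.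
Proof. by rewrite -setIUr => /setIidPl. Qed.

Lemma disjoint_setI2 (S X Y : {set T}) :
  [disjoint X & Y] -> [disjoint S :&: X & S :&: Y].
Proof. exact/disjointW/subsetIr/subsetIr. Qed.

Lemma card_split (S X Y : {set T}) : [disjoint X & Y] -> S \subset X :|: Y ->
  #|S| = (#|S :&: X| + #|S :&: Y|)%N.
Proof.
by move=> d sS; rewrite -{1}(setI_split sS) card_setU_disjoint // disjoint_setI2.
Qed.

Lemma deg_in_split (S X Y : {set T}) (v : T) : [disjoint X & Y] ->
  S \subset X :|: Y -> deg_in e S v = (deg_in e (S :&: X) v + deg_in e (S :&: Y) v)%N.
Proof.
by move=> d sS; rewrite -{1}(setI_split sS) deg_in_setU // disjoint_setI2.
Qed.

Lemma deg_in_partition (I : finType) (P : I -> {set T}) (v : T) :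
  (forall p q, p != q -> [disjoint P p & P q]) -> (forall x, exists p, x \in P p) ->
  deg_in e [set: T] v = (\sum_p deg_in e (P p) v)%N.
Proof.
move=> dis cov; rewrite /deg_in -sum1_card big_mkcond /=.
under [RHS]eq_bigr => p _ do rewrite -sum1_card big_mkcond /=.
rewrite exchange_big /=; apply: eq_bigr => u _; have [p up] := cov u.
rewrite (bigD1 p) //= big1 => [|q qp]; first by rewrite !inE up addn0.
by rewrite inE (disjointFr (dis p q _) up) // eq_sym.
Qed.

End EdgeCounting.

Section EdgeBounds.
Variables (R : realType) (T : finType) (e : rel T).
Hypothesis esym : symmetric e.

Lemma sum_ge_card_mul (A : {set T}) (g : T -> nat) (c : R) :
  (forall x, x \in A -> c <= (g x)%:R) -> #|A|%:R * c <= (\sum_(x in A) g x)%:R.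
Proof.
by move=> h; rewrite natr_sum mulr_natl -sumr_const; apply: ler_sum.
Qed.

Lemma eG_ge_cross (X Y Z : {set T}) (c : R) :
  [disjoint X & Y] -> Z \subset Y -> (forall y, y \in Z -> c <= (deg_in e X y)%:R) ->
  #|Z|%:R * c <= (eG e X Y)%:R.
Proof.
move=> dXY sZ h; apply: (le_trans (sum_ge_card_mul h)).
rewrite eG_disjoint // ler_nat [X in (_ <= X)%N](big_setID Z) /= (setIidPr sZ).
exact: leq_addr.
Qed.

Lemma eG_ge_self (X Z : {set T}) (c : R) : irreflexive e ->
  Z \subset X -> (forall y, y \in Z -> c <= (deg_in e X y)%:R) ->
  #|Z|%:R * c <= 2 * (eG e X X)%:R.
Proof.
move=> eirr sZ h; apply: (le_trans (sum_ge_card_mul h)); rewrite -natrM ler_nat.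
apply: leq_trans (sum_deg_self esym _ eirr).
by rewrite [X in (_ <= X)%N](big_setID Z) /= (setIidPr sZ) leq_addr.
Qed.

Lemma sparse_cut_sym (zeta : R) (X1 X2 : {set T}) :
  sparse_cut e zeta X1 X2 -> sparse_cut e zeta X2 X1.
Proof. by rewrite /sparse_cut eG_sym // mulrAC. Qed.

Lemma not_sparse_of_many_edges (zeta L N : R) (X1 X2 : {set T}) : 0 <= zeta ->
  L <= (eG e X1 X2)%:R -> zeta * N * N < L -> #|X1|%:R <= N -> #|X2|%:R <= N ->
  ~ sparse_cut e zeta X1 X2.
Proof.
move=> z0 hL hN h1 h2 sp.
have ab : #|X1|%:R * #|X2|%:R <= N * N by apply: ler_pM; rewrite ?ler0n.
have : zeta * (#|X1|%:R * #|X2|%:R) <= zeta * (N * N) by apply: ler_wpM2l.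
move: sp; rewrite /sparse_cut !mulrA; lra.
Qed.

End EdgeBounds.

Section Cuts.
Variables (R : realType) (T : finType) (e : rel T).
Hypothesis esym : symmetric e.

Definition min_deg_ge (X : {set T}) (d : R) : Prop :=
  forall x, x \in X -> d <= (deg_in e X x)%:R.

(* In a set of minimum degree delta n, a side of size at most delta n / 2
   sends at least delta n / 2 edges per vertex across the cut. *)
Lemma small_side_not_sparse (n : nat) (delta zeta : R) (X X1 X2 : {set T}) :
  0 <= zeta -> zeta < delta / 2 -> X1 :|: X2 = X -> [disjoint X1 & X2] ->
  X1 != set0 -> (#|X2| <= n)%N -> min_deg_ge X (delta * n%:R) ->
  #|X1|%:R <= delta * n%:R / 2 -> ~ sparse_cut e zeta X1 X2.
Proof.
move=> z0 hz U d ne X2n hdeg s1 sp.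
have lb x : x \in X1 -> delta * n%:R / 2 <= (deg_in e X2 x)%:R.
  move=> x1; have := hdeg x; rewrite -U inE x1 deg_in_setU // natrD => /(_ isT).
  have := deg_in_le_card e X1 x; rewrite -(ler_nat R); lra.
have E : #|X1|%:R * (delta * n%:R / 2) <= (eG e X1 X2)%:R.
  by rewrite eG_sym //; apply: (eG_ge_cross esym _ (subxx X1) lb); rewrite disjoint_sym.
have a0 : 0 < #|X1|%:R :> R by rewrite ltr0n lt0n cards_eq0.
have bn : #|X2|%:R <= n%:R :> R by rewrite ler_nat.
move: sp; rewrite /sparse_cut => sp.
have hb : zeta * #|X1|%:R * #|X2|%:R <= zeta * #|X1|%:R * n%:R.
  by apply: ler_wpM2l => //; apply: mulr_ge0 => //; apply: ltW.
have : #|X1|%:R * ((delta / 2 - zeta) * n%:R) <= 0.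
  have -> : #|X1|%:R * ((delta / 2 - zeta) * n%:R) =
    #|X1|%:R * (delta * n%:R / 2) - zeta * #|X1|%:R * n%:R by ring.
  lra.
rewrite !pmulr_rle0 ?subr_gt0 // lern0 => /eqP n0.
by move: s1; rewrite n0 mulr0 mul0r; lra.
Qed.

Lemma no_sparse_cut_of_large_sides (n : nat) (delta zeta : R) (X : {set T}) :
  0 <= zeta -> zeta < delta / 2 -> (#|X| <= n)%N -> min_deg_ge X (delta * n%:R) ->
  (forall X1 X2, X1 :|: X2 = X -> [disjoint X1 & X2] ->
     delta * n%:R / 2 < #|X1|%:R -> delta * n%:R / 2 < #|X2|%:R ->
     ~ sparse_cut e zeta X1 X2) ->
  forall X1 X2, is_cut X X1 X2 -> ~ sparse_cut e zeta X1 X2.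
Proof.
move=> z0 hz Xn hdeg large X1 X2 [U d ne1 ne2].
have small (S : {set T}) : S \subset X -> (#|S| <= n)%N.
  by move=> sS; apply: leq_trans Xn; apply: subset_leq_card.
have [h1|h1] := lerP #|X1|%:R (delta * n%:R / 2).
  by apply: (small_side_not_sparse z0 hz U d ne1 _ hdeg h1); rewrite small // -U subsetUr.
have [h2|h2] := lerP #|X2|%:R (delta * n%:R / 2); last exact: large.
move=> /(sparse_cut_sym esym); apply: (small_side_not_sparse z0 hz _ _ ne2 _ hdeg h2).
- by rewrite setUC.
- by rewrite disjoint_sym.
- by rewrite small // -U subsetUl.
Qed.

Lemma RN_sub (Hs S : {set T}) (nu : R) : RN e Hs nu S \subset Hs.
Proof. by apply/subsetP => v; rewrite inE => /andP []. Qed.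

(* In a robust expander, a cut with both sides of proportion at least tau has
   a robust neighbourhood reaching nu |X| vertices across the cut, each with
   nu |X| edges back, so at least (nu |X|)^2 crossing edges. *)
Lemma expander_cut_not_sparse (nu tau zeta : R) (X X1 X2 : {set T}) :
  0 <= zeta -> zeta < nu * nu -> 0 < nu -> X1 != set0 ->
  X1 :|: X2 = X -> [disjoint X1 & X2] -> robust_expander e X nu tau ->
  tau * #|X|%:R <= #|X1|%:R -> tau * #|X|%:R <= #|X2|%:R ->
  ~ sparse_cut e zeta X1 X2.
Proof.
move=> z0 hz nu0 ne U d exp h1 h2.
have cX : #|X|%:R = #|X1|%:R + #|X2|%:R :> R by rewrite -U card_setU_disjoint // natrD.
have sub1 : X1 \subset X by rewrite -U subsetUl.
have sub2 : X2 \subset X by rewrite -U subsetUr.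
have ex := exp X1 sub1 h1 (ltac:(lra)).
set Z := RN e X nu X1 :&: X2.
have cover : (#|RN e X nu X1| <= #|X1| + #|Z|)%N.
  apply: leq_trans (leq_card_setU _ _); apply/subset_leq_card/subsetP => v vN.
  have := subsetP (RN_sub X X1 nu) v vN; rewrite -U !in_setU /Z in_setI vN /=.
  by case/orP => ->; rewrite ?orbT.
have lb y : y \in Z -> nu * #|X|%:R <= (deg_in e X1 y)%:R.
  by rewrite !inE => /andP [/andP [_ ->]].
have E := eG_ge_cross esym d (subsetIr _ _) lb.
have N0 : 0 < #|X|%:R :> R.
  by rewrite ltr0n; apply: leq_trans (subset_leq_card sub1); rewrite lt0n cards_eq0.
move: cover; rewrite -(ler_nat R) natrD => cover.
have hZ : nu * #|X|%:R <= #|Z|%:R by lra.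
apply: (not_sparse_of_many_edges (N := #|X|%:R) z0 E); last 2 first.
- by rewrite ler_nat subset_leq_card.
- by rewrite ler_nat subset_leq_card.
have nN : 0 < nu * #|X|%:R by apply: mulr_gt0.
have : nu * #|X|%:R * (nu * #|X|%:R) <= #|Z|%:R * (nu * #|X|%:R).
  by apply: ler_wpM2r => //; apply: ltW.
have : zeta * #|X|%:R * #|X|%:R < nu * nu * (#|X|%:R * #|X|%:R).
  by rewrite -mulrA ltr_pM2r // mulr_gt0.
have -> : nu * #|X|%:R * (nu * #|X|%:R) = nu * nu * (#|X|%:R * #|X|%:R) by ring.
lra.
Qed.

Lemma expander_no_sparse_cut (n : nat) (delta nu tau zeta : R) (X : {set T}) :
  0 <= zeta -> zeta < delta / 2 -> zeta < nu * nu -> 0 < nu -> 0 <= tau ->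
  tau <= delta / 2 -> (#|X| <= n)%N -> robust_expander e X nu tau ->
  min_deg_ge X (delta * n%:R) ->
  forall X1 X2, is_cut X X1 X2 -> ~ sparse_cut e zeta X1 X2.
Proof.
move=> z0 hzd hz nu0 t0 htd Xn exp hdeg.
apply: (no_sparse_cut_of_large_sides z0 hzd Xn hdeg) => X1 X2 U d h1 h2.
have tX : tau * #|X|%:R <= delta * n%:R / 2.
  apply: (@le_trans _ _ (tau * n%:R)); first by rewrite ler_wpM2l // ler_nat.
  by rewrite mulrAC ler_wpM2r.
have ne : X1 != set0.
  rewrite -cards_eq0 -lt0n -(ltr0n R); apply: le_lt_trans h1.
  by apply: le_trans tX; rewrite mulr_ge0.
apply: (expander_cut_not_sparse z0 hz nu0 ne U d exp); lra.
Qed.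

End Cuts.

Section BipartiteCuts.
Variables (R : realType) (T : finType) (e : rel T).
Hypothesis esym : symmetric e.
Hypothesis eirr : irreflexive e.
Variables (A B : {set T}).
Hypothesis dAB : [disjoint A & B].

(* A cut X1, X2 of A u B meeting A in fewer than tau |A| vertices on the
   X1 side: since vertices of B have at least half of their degree in A
   (condition (D5)), the vertices of X1 in B send delta n / 4 edges each to X2. *)
Lemma bip_unbalanced_cut_not_sparse (n : nat) (delta tau zeta : R) (X1 X2 : {set T}) :
  0 <= zeta -> 0 < delta -> 0 <= tau -> tau <= delta / 4 -> zeta * 16 < delta * delta ->
  X1 :|: X2 = A :|: B -> [disjoint X1 & X2] -> (#|A :|: B| <= n)%N ->
  (forall y, y \in B -> (deg_in e B y <= deg_in e A y)%N) ->
  min_deg_ge e (A :|: B) (delta * n%:R) ->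
  #|X1 :&: A|%:R < tau * #|A|%:R -> delta * n%:R / 2 < #|X1|%:R ->
  ~ sparse_cut e zeta X1 X2.
Proof.
move=> z0 d0 t0 htd hz U d Wn hB hdeg hX1A hX1.
have le_n (S : {set T}) : S \subset A :|: B -> #|S|%:R <= n%:R :> R.
  by move=> sS; rewrite ler_nat; apply: leq_trans Wn; apply: subset_leq_card.
have An := le_n A (subsetUl _ _).
have sA : A \subset X1 :|: X2 by rewrite U subsetUl.
have lb y : y \in X1 :&: B -> delta * n%:R / 4 <= (deg_in e X2 y)%:R.
  rewrite inE => /andP [y1 yB].
  have := hdeg y; rewrite inE yB orbT deg_in_setU // natrD => /(_ isT).
  have := hB y yB; rewrite -(ler_nat R) (deg_in_split _ _ d sA) natrD.
  have := deg_in_le_card e (A :&: X1) y; rewrite -(ler_nat R) setIC.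
  have := deg_in_mono e y (subsetIr A X2); rewrite -(ler_nat R).
  have : tau * #|A|%:R <= delta / 4 * n%:R by apply: ler_pM.
  lra.
have E : #|X1 :&: B|%:R * (delta * n%:R / 4) <= (eG e X1 X2)%:R.
  by rewrite eG_sym //; apply: (eG_ge_cross esym _ (subsetIl X1 B) lb); rewrite disjoint_sym.
have X1n : #|X1|%:R <= n%:R :> R by rewrite le_n // -U subsetUl.
have X2n : #|X2|%:R <= n%:R :> R by rewrite le_n // -U subsetUr.
have n0 : 0 < n%:R :> R.
  rewrite ltr0n lt0n; apply/eqP => n0; move: hX1 X1n; rewrite n0 mulr0 mul0r; lra.
have cX1 : #|X1|%:R = #|X1 :&: A|%:R + #|X1 :&: B|%:R :> R.
  by rewrite -natrD -card_split // -U subsetUl.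
have tA : tau * #|A|%:R <= delta / 4 * n%:R by apply: ler_pM.
have q0 : 0 <= delta * n%:R / 4 by rewrite divr_ge0 // mulr_ge0 // ltW.
have big : delta * n%:R / 4 * (delta * n%:R / 4) <= #|X1 :&: B|%:R * (delta * n%:R / 4).
  by apply: ler_wpM2r => //; rewrite mulrAC; lra.
apply: (not_sparse_of_many_edges z0 E _ X1n X2n); apply: lt_le_trans big.
have -> : delta * n%:R / 4 * (delta * n%:R / 4) = delta * delta / 16 * (n%:R * n%:R) by field.
by rewrite -mulrA ltr_pM2r ?mulr_gt0 //; lra.
Qed.

(* Vertices of A with at least c neighbours inside A; as A spans few edges
   (condition (D3)), there are few of them. *)
Definition high_deg (c : R) : {set T} := [set v in A | c <= (deg_in e A v)%:R].

(* One side of a balanced cut of A u B: the robust neighbourhood of X1 n A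
   lies in A only through high-degree vertices, otherwise it lies in X1 n B or
   crosses into X2 n B; the k crossing vertices each send nu |A u B| edges
   back to X1. *)
Lemma bip_expansion_crossing (nu tau : R) (X1 X2 : {set T}) :
  X1 :|: X2 = A :|: B -> [disjoint X1 & X2] -> bip_robust_expander e A B nu tau ->
  tau * #|A|%:R <= #|X1 :&: A|%:R -> tau * #|A|%:R <= #|X2 :&: A|%:R ->
  exists2 k : R,
    #|X1 :&: A|%:R + nu * #|A :|: B|%:R
      <= #|high_deg (nu * #|A :|: B|%:R)|%:R + #|X1 :&: B|%:R + k
    & k * (nu * #|A :|: B|%:R) <= (eG e X1 X2)%:R.
Proof.
move=> U d bexp h1 h2.
have cA : #|A|%:R = #|X1 :&: A|%:R + #|X2 :&: A|%:R :> R.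
  by rewrite -natrD (card_split d) ?U ?subsetUl // !(setIC A).
have ex := bexp (X1 :&: A) (subsetIr _ _) h1 ltac:(lra).
set Z := RN e (A :|: B) nu (X1 :&: A) :&: (X2 :&: B).
exists #|Z|%:R.
  apply: le_trans ex _; rewrite -!natrD ler_nat.
  apply: leq_trans (leq_add (leq_card_setU _ _) (leqnn _)).
  apply: leq_trans (leq_card_setU _ _); apply/subset_leq_card/subsetP => v vN.
  move: (vN); rewrite inE => /andP [vAB hv]; rewrite !in_setU.
  case/setUP: vAB => [vA|vB].
    by rewrite inE vA (le_trans hv) // ler_nat deg_in_mono // subsetIr.
  have : v \in X1 :|: X2 by rewrite U inE vB orbT.
  by rewrite /Z !in_setI vN vB in_setU => /orP [->|->]; rewrite ?orbT.
apply: eG_ge_cross => //; first by apply/subsetP => y; rewrite !inE => /and3P [].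
move=> y; rewrite !inE => /andP [/andP [_ hy] _]; apply: le_trans hy _.
by rewrite ler_nat deg_in_mono // subsetIl.
Qed.

(* A cut of A u B splitting A in proportions at least tau: adding up the two
   sides of bip_expansion_crossing, the crossing vertices number at least
   nu |A u B|, so one side has nu |A u B| / 2 of them. *)
Lemma bip_balanced_cut_not_sparse (n : nat) (rho nu tau delta zeta : R)
    (X1 X2 : {set T}) :
  (0 < n)%N -> 0 <= zeta -> 0 < nu -> 0 < delta ->
  8 * rho <= nu * nu * (delta * delta) -> 2 * rho <= nu * delta ->
  zeta * 2 < nu * nu ->
  X1 :|: X2 = A :|: B -> [disjoint X1 & X2] -> bip_robust_expander e A B nu tau ->
  tau * #|A|%:R <= #|X1 :&: A|%:R -> tau * #|A|%:R <= #|X2 :&: A|%:R ->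
  (eG e A A)%:R <= rho * n%:R ^+ 2 -> #|B|%:R <= #|A|%:R + rho * n%:R ->
  delta * n%:R <= #|A :|: B|%:R -> ~ sparse_cut e zeta X1 X2.
Proof.
move=> n0 z0 nu0 d0 hr1 hr2 hz U d bexp h1 h2 eAA hBA hN.
have U' : X2 :|: X1 = A :|: B by rewrite setUC.
have d' : [disjoint X2 & X1] by rewrite disjoint_sym.
have [k1 c1 E1] := bip_expansion_crossing U d bexp h1 h2.
have [k2 c2 E2] := bip_expansion_crossing U' d' bexp h2 h1.
rewrite eG_sym // in E2.
have sA : A \subset X1 :|: X2 by rewrite U subsetUl.
have sB : B \subset X1 :|: X2 by rewrite U subsetUr.
have cA : #|A|%:R = #|X1 :&: A|%:R + #|X2 :&: A|%:R :> R.
  by rewrite -natrD (card_split d sA) !(setIC A).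
have cB : #|B|%:R = #|X1 :&: B|%:R + #|X2 :&: B|%:R :> R.
  by rewrite -natrD (card_split d sB) !(setIC B).
have cN : #|A :|: B|%:R = #|A|%:R + #|B|%:R :> R by rewrite card_setU_disjoint ?natrD.
have X1N : #|X1|%:R <= #|A :|: B|%:R :> R by rewrite ler_nat subset_leq_card // -U subsetUl.
have X2N : #|X2|%:R <= #|A :|: B|%:R :> R by rewrite ler_nat subset_leq_card // -U subsetUr.
move: c1 c2 E1 E2 hN cN X1N X2N.
set N := #|A :|: B|%:R; set m := #|high_deg (nu * N)|%:R.
move=> c1 c2 E1 E2 hN cN X1N X2N.
have nn0 : 0 < n%:R :> R by rewrite ltr0n.
have N0 : 0 < N by apply: lt_le_trans hN; rewrite mulr_gt0.
have nN : 0 < nu * N by rewrite mulr_gt0.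
have hM : m * (nu * N) <= 2 * (rho * n%:R ^+ 2).
  have sM : high_deg (nu * N) \subset A by apply/subsetP => v; rewrite inE => /andP [].
  have hdeg v : v \in high_deg (nu * N) -> nu * N <= (deg_in e A v)%:R.
    by rewrite inE => /andP [].
  by apply: le_trans (eG_ge_self esym eirr sM hdeg) _; rewrite ler_pM2l.
have q1 : 8 * (rho * n%:R ^+ 2) <= nu * N * (nu * N).
  have sq : delta * n%:R * (delta * n%:R) <= N * N.
    by apply: ler_pM => //; rewrite mulr_ge0 // ltW.
  have e1 : 8 * (rho * n%:R ^+ 2) <= nu * nu * (delta * delta) * n%:R ^+ 2.
    by rewrite mulrA ler_wpM2r // exprn_ge0.
  have e2 : nu * nu * (delta * n%:R * (delta * n%:R)) <= nu * nu * (N * N).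
    by rewrite ler_wpM2l // mulr_ge0 // ltW.
  have -> : nu * N * (nu * N) = nu * nu * (N * N) by ring.
  have e3 : nu * nu * (delta * n%:R * (delta * n%:R)) =
    nu * nu * (delta * delta) * n%:R ^+ 2 by rewrite expr2; ring.
  lra.
have q3 : m <= nu * N / 4.
  rewrite -(ler_pM2r nN); apply: le_trans hM _.
  have -> : nu * N / 4 * (nu * N) = nu * N * (nu * N) / 4 by ring.
  lra.
have q4 : rho * n%:R <= nu * N / 2.
  have : 2 * rho * n%:R <= nu * delta * n%:R by rewrite ler_wpM2r.
  have : nu * (delta * n%:R) <= nu * N by rewrite ler_wpM2l // ltW.
  rewrite !mulrA; lra.
have zN : zeta * N * N < nu * N / 2 * (nu * N).
  have -> : nu * N / 2 * (nu * N) = nu * nu / 2 * (N * N) by ring.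
  by rewrite -mulrA ltr_pM2r ?mulr_gt0 //; lra.
have [hk|hk] := lerP (nu * N / 2) k1.
- apply: (not_sparse_of_many_edges z0 E1 _ X1N X2N); apply: lt_le_trans zN _.
  by rewrite ler_wpM2r // ltW.
- apply: (not_sparse_of_many_edges z0 E2 _ X1N X2N); apply: lt_le_trans zN _.
  by rewrite ler_wpM2r ?ltW //; lra.
Qed.

Lemma bip_expander_no_sparse_cut (n : nat) (rho nu tau delta zeta : R) :
  (0 < n)%N -> 0 <= zeta -> 0 < nu -> 0 < delta -> delta <= 1 -> 0 <= tau ->
  tau <= delta / 4 -> 8 * rho <= nu * nu * (delta * delta) ->
  2 * rho <= nu * delta -> zeta * 16 < delta * delta -> zeta * 2 < nu * nu ->
  (#|A :|: B| <= n)%N -> bip_robust_expander e A B nu tau ->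
  (forall y, y \in B -> (deg_in e B y <= deg_in e A y)%N) ->
  min_deg_ge e (A :|: B) (delta * n%:R) ->
  (eG e A A)%:R <= rho * n%:R ^+ 2 -> #|B|%:R <= #|A|%:R + rho * n%:R ->
  forall X1 X2, is_cut (A :|: B) X1 X2 -> ~ sparse_cut e zeta X1 X2.
Proof.
move=> n0 z0 nu0 d0 d1 t0 htd hr1 hr2 hz1 hz2 Wn bexp hB hdeg eAA hBA.
have hzd : zeta < delta / 2.
  have : delta * delta <= delta * 1 by rewrite ler_wpM2l // ltW.
  lra.
apply: (no_sparse_cut_of_large_sides esym z0 hzd Wn hdeg) => X1 X2 U d h1 h2.
have [x xX1] : exists x, x \in X1.
  apply/set0Pn; rewrite -card_gt0 -(ltr0n R); apply: le_lt_trans h1.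
  by rewrite divr_ge0 // mulr_ge0 // ltW.
have hN : delta * n%:R <= #|A :|: B|%:R.
  have xW : x \in A :|: B by rewrite -U inE xX1.
  by apply: le_trans (hdeg x xW) _; rewrite ler_nat deg_in_le_card.
have [a1|a1] := ltrP #|X1 :&: A|%:R (tau * #|A|%:R).
  exact: (bip_unbalanced_cut_not_sparse z0 d0 t0 htd hz1 U d Wn hB hdeg a1 h1).
have [a2|a2] := ltrP #|X2 :&: A|%:R (tau * #|A|%:R).
  move=> /(sparse_cut_sym esym).
  by apply: (bip_unbalanced_cut_not_sparse z0 d0 t0 htd hz1 _ _ Wn hB hdeg a2 h2);
    rewrite 1?setUC 1?disjoint_sym.
exact: (bip_balanced_cut_not_sparse n0 z0 nu0 d0 hr1 hr2 hz2 U d bexp a1 a2 eAA hBA hN).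
Qed.

End BipartiteCuts.

Section Bipartiteness.
Variables (R : realType) (T : finType) (e : rel T).
Hypothesis esym : symmetric e.
Hypothesis eirr : irreflexive e.

Lemma non_cross_edges_sym (V X Y : {set T}) :
  non_cross_edges e V X Y = non_cross_edges e V Y X.
Proof. by rewrite /non_cross_edges Eset_sym. Qed.

Lemma eG_side_le_non_cross (V X Y : {set T}) :
  bipartition V X Y -> (eG e Y Y <= non_cross_edges e V X Y)%N.
Proof.
move=> [U d]; have sV : Eset e Y Y \subset Eset e V V by apply: Eset_mono; rewrite -U subsetUr.
apply/subset_leq_card/subsetP => s sY; rewrite in_setD (subsetP sV _ sY) andbT.
move: sY; rewrite !inE => /existsP [a /existsP [b /and4P [/eqP -> _ aY bY]]].
apply/negP => /existsP [x /existsP [y /and4P [/eqP h _ xX _]]].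
have /set2P [xa|xb] : x \in [set a; b] by rewrite h !inE eqxx.
- by move: (disjointFr d xX); rewrite xa aY.
- by move: (disjointFr d xX); rewrite xb bY.
Qed.

(* If one side of a bipartition of V is smaller than tau |V|, the other side
   keeps minimum degree delta n / 2 and size delta n / 2, hence spans
   delta^2 n^2 / 8 edges. *)
Lemma small_side_dense (n : nat) (delta tau : R) (V X Y : {set T}) :
  0 <= tau -> tau <= delta / 2 -> delta <= 1 -> bipartition V X Y -> (#|V| <= n)%N ->
  min_deg_ge e V (delta * n%:R) -> delta * n%:R <= #|V|%:R ->
  #|X|%:R < tau * #|V|%:R -> delta * delta * n%:R ^+ 2 / 8 <= (eG e Y Y)%:R.
Proof.
move=> t0 htd d1 [U d] Vn hdeg hV hX.
have cV : #|V|%:R = #|X|%:R + #|Y|%:R :> R by rewrite -U card_setU_disjoint ?natrD.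
have tV : tau * #|V|%:R <= delta * n%:R / 2.
  apply: (@le_trans _ _ (tau * n%:R)); first by rewrite ler_wpM2l // ler_nat.
  by rewrite mulrAC ler_wpM2r.
have lb v : v \in Y -> delta * n%:R / 2 <= (deg_in e Y v)%:R.
  move=> vY; have := hdeg v; rewrite -U inE vY orbT deg_in_setU // natrD.
  have := deg_in_le_card e X v; rewrite -(ler_nat R) => hX' /(_ isT); lra.
have hY : delta * n%:R / 2 <= #|Y|%:R.
  have : tau * #|V|%:R <= 1 / 2 * #|V|%:R by rewrite ler_wpM2r //; lra.
  lra.
have := eG_ge_self esym eirr (subxx Y) lb.
have : delta * n%:R / 2 * (delta * n%:R / 2) <= #|Y|%:R * (delta * n%:R / 2).
  by apply: ler_wpM2r hY; apply: divr_ge0 => //; apply: mulr_ge0 => //; lra.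
have -> : delta * n%:R / 2 * (delta * n%:R / 2) = delta * delta * n%:R ^+ 2 / 8 * 2.
  by rewrite expr2; field.
lra.
Qed.

(* If both sides of a bipartition of a robust expander V have proportion at
   least tau, the robust neighbourhood of one side meets that side itself in
   nu |V| vertices, each with nu |V| neighbours there. *)
Lemma expander_dense_side (nu tau : R) (V X Y : {set T}) :
  0 <= nu -> robust_expander e V nu tau -> bipartition V X Y ->
  tau * #|V|%:R <= #|X|%:R -> tau * #|V|%:R <= #|Y|%:R ->
  nu * #|V|%:R * (nu * #|V|%:R) / 2 <= (eG e X X)%:R \/
  nu * #|V|%:R * (nu * #|V|%:R) / 2 <= (eG e Y Y)%:R.
Proof.
move=> nu0 exp [U d] hX hY; set N := #|V|%:R.
have grow (S S' : {set T}) : S :|: S' = V -> [disjoint S & S'] ->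
    tau * N <= #|S|%:R -> tau * N <= #|S'|%:R ->
    #|S|%:R + nu * N <= #|RN e V nu S :&: S|%:R + #|S'|%:R.
  move=> US dS h h'.
  have cS : N = #|S|%:R + #|S'|%:R by rewrite /N -US card_setU_disjoint ?natrD.
  have sS : S \subset V by rewrite -US subsetUl.
  apply: le_trans (exp S sS h ltac:(lra)) _.
  rewrite -natrD ler_nat; apply: leq_trans (leq_card_setU _ _).
  apply/subset_leq_card/subsetP => v vN.
  have : v \in S :|: S' by rewrite US (subsetP (RN_sub e V S nu) v vN).
  by rewrite !in_setU in_setI vN => /orP [->|->]; rewrite ?orbT.
have dense (S : {set T}) : S \subset V -> nu * N <= #|RN e V nu S :&: S|%:R ->
    nu * N * (nu * N) / 2 <= (eG e S S)%:R.
  move=> sS h; have lb v : v \in RN e V nu S :&: S -> nu * N <= (deg_in e S v)%:R.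
    by rewrite !inE => /andP [/andP [_ ->]].
  have := eG_ge_self esym eirr (subsetIr _ _) lb.
  have : nu * N * (nu * N) <= #|RN e V nu S :&: S|%:R * (nu * N).
    by rewrite ler_wpM2r // mulr_ge0.
  lra.
have UYX : Y :|: X = V by rewrite setUC.
have dYX : [disjoint Y & X] by rewrite disjoint_sym.
have g1 := grow X Y U d hX hY.
have g2 := grow Y X UYX dYX hY hX.
have [h|h] := lerP (nu * N) #|RN e V nu X :&: X|%:R.
  by left; apply: dense h; rewrite -U subsetUl.
by right; apply: dense; [rewrite -U subsetUr | lra].
Qed.

Lemma expander_far_from_bipartite (n : nat) (delta nu tau gamma : R) (V : {set T}) :
  0 < nu -> 0 <= tau -> 0 < delta -> delta <= 1 -> tau <= delta / 2 ->
  gamma * 2 < nu * nu * (delta * delta) -> gamma * 8 < delta * delta ->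
  V != set0 -> (#|V| <= n)%N -> robust_expander e V nu tau ->
  min_deg_ge e V (delta * n%:R) -> far_from_bipartite e n gamma V.
Proof.
move=> nu0 t0 d0 d1 htd hg1 hg2 ne Vn exp hdeg X Y bip.
have hV : delta * n%:R <= #|V|%:R.
  have [x xV] := set0Pn _ ne; apply: le_trans (hdeg x xV) _.
  by rewrite ler_nat deg_in_le_card.
have n0 : 0 < n%:R :> R.
  by rewrite ltr0n; apply: leq_trans Vn; rewrite card_gt0.
have pib : bipartition V Y X by case: bip => U d; split; rewrite 1?setUC 1?disjoint_sym.
have ncY := eG_side_le_non_cross bip.
have ncX := eG_side_le_non_cross pib; rewrite non_cross_edges_sym in ncX.
move: ncX ncY; rewrite -!(ler_nat R); set nc := (non_cross_edges e V X Y)%:R => ncX ncY.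
have nn : 0 < n%:R ^+ 2 :> R by rewrite exprn_gt0.
have g1 : gamma * n%:R ^+ 2 < delta * delta * n%:R ^+ 2 / 8.
  by rewrite mulrAC ltr_pM2r //; lra.
have [hX|hX] := ltrP #|X|%:R (tau * #|V|%:R).
  by have := small_side_dense t0 htd d1 bip Vn hdeg hV hX; lra.
have [hY|hY] := ltrP #|Y|%:R (tau * #|V|%:R).
  by have := small_side_dense t0 htd d1 pib Vn hdeg hV hY; lra.
have g2 : gamma * n%:R ^+ 2 < nu * #|V|%:R * (nu * #|V|%:R) / 2.
  have sq : delta * n%:R * (delta * n%:R) <= #|V|%:R * #|V|%:R.
    by apply: ler_pM => //; rewrite mulr_ge0 // ltW.
  have : nu * nu * (delta * n%:R * (delta * n%:R)) <= nu * nu * (#|V|%:R * #|V|%:R).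
    by rewrite ler_wpM2l // mulr_ge0 // ltW.
  have : gamma * n%:R ^+ 2 < nu * nu * (delta * delta) / 2 * n%:R ^+ 2.
    by rewrite ltr_pM2r //; lra.
  have -> : nu * nu * (delta * delta) / 2 * n%:R ^+ 2 =
    nu * nu * (delta * n%:R * (delta * n%:R)) / 2 by rewrite expr2; field.
  have -> : nu * #|V|%:R * (nu * #|V|%:R) / 2 = nu * nu * (#|V|%:R * #|V|%:R) / 2 by field.
  lra.
by case: (expander_dense_side (ltW nu0) exp bip hX hY) => h; lra.
Qed.

(* Parts W_j: every edge of A u B not crossing A, B leaves A towards the
   complement of B or B towards the complement of A, so (D3) bounds them. *)
Lemma bipartite_part_almost_bipartite (n : nat) (rho beta : R) (A B : {set T}) :
  [disjoint A & B] -> ((eG e A (~: B) + eG e B (~: A))%N)%:R <= rho * n%:R ^+ 2 ->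
  rho <= beta -> almost_bipartite_with e n beta (A :|: B) A B.
Proof.
move=> dAB hE hb; split; first by [].
have edge_in (X Y : {set T}) x y : e x y -> x \in X -> y \in Y -> [set x; y] \in Eset e X Y.
  by move=> exy xX yY; rewrite inE; apply/existsP; exists x; apply/existsP; exists y;
    rewrite eqxx exy xX yY.
have sub : Eset e (A :|: B) (A :|: B) :\: Eset e A B \subset
    Eset e A (~: B) :|: Eset e B (~: A).
  apply/subsetP => s; rewrite in_setD => /andP [nAB].
  rewrite inE => /existsP [x /existsP [y /and4P [/eqP hs exy xW yW]]]; subst s.
  move: xW yW; rewrite !in_setU => /orP [xA|xB] yW.
  - case: (boolP (y \in B)) => yB; last by rewrite (edge_in A (~: B)) // inE.
    by rewrite (edge_in A B) in nAB.
  - case: (boolP (y \in A)) => yA; last by rewrite (edge_in B (~: A)) ?orbT // inE.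
    have eyx : e y x by rewrite esym.
    by rewrite setUC (edge_in A B y x) in nAB.
have c := leq_trans (subset_leq_card sub) (leq_card_setU _ _).
rewrite -(ler_nat R) in c; apply: le_trans c (le_trans hE _).
by rewrite ler_wpM2r // exprn_ge0.
Qed.

End Bipartiteness.

Section RobustPartition.
Variables (R : realType) (T : finType) (e : rel T) (n D k l : nat) (rho nu tau : R).
Variables (Vs : 'I_k -> {set T}) (As Bs : 'I_l -> {set T}).
Hypothesis RP : robust_partition e n D rho nu tau Vs As Bs.

Local Notation P := (rp_part Vs As Bs).
Local Notation nr := (n%:R : R).

Lemma rp_params : 0 < rho /\ rho <= nu /\ nu <= tau /\ tau < 1.
Proof. by case: RP. Qed.

Lemma rp_disjoint p q : p != q -> [disjoint P p & P q].
Proof. by case: RP => _ [[dis _] _]; apply: dis. Qed.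

Lemma rp_cover x : exists p, x \in P p.
Proof. by case: RP => _ [[_ cov] _]; apply: cov. Qed.

Lemma rp_D2 i : [/\ Num.sqrt rho * nr <= #|Vs i|%:R,
  (eG e (Vs i) (~: Vs i))%:R <= rho * nr ^+ 2 & robust_expander e (Vs i) nu tau].
Proof. by case: RP => _ [_ [D2 _]]; apply: D2. Qed.

Lemma rp_D3 j : [/\ [disjoint As j & Bs j],
  Num.sqrt rho * nr <= #|As j|%:R /\ Num.sqrt rho * nr <= #|Bs j|%:R,
  `|#|As j|%:R - #|Bs j|%:R| <= rho * nr,
  (eG e (As j) (~: Bs j) + eG e (Bs j) (~: As j))%:R <= rho * nr ^+ 2
  & bip_robust_expander e (As j) (Bs j) nu tau].
Proof. by case: RP => _ [_ [_ [D3 _]]]; apply: D3. Qed.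

Lemma rp_D4 p q x : x \in P p -> (deg_in e (P q) x <= deg_in e (P p) x)%N.
Proof. by case: RP => _ [_ [_ [_ [D4 _]]]]; apply: D4. Qed.

Lemma rp_D5 j y : y \in Bs j -> (deg_in e (Bs j) y <= deg_in e (As j) y)%N.
Proof. by case: RP => _ [_ [_ [_ [_ [D5 _]]]]]; apply: (D5 j).2. Qed.

Lemma rp_D6 : ((k + 2 * l)%:~R <=
  (Num.floor ((1 + powR rho (3%:R^-1)) * nr / D%:R))%:~R :> R).
Proof. by case: RP => _ [_ [_ [_ [_ [_ [D6 _]]]]]]. Qed.

(* Parts have at least sqrt(rho) n vertices, so they are non-empty. *)
Lemma rp_nonempty p : (0 < n)%N -> P p != set0.
Proof.
move=> n0; have [r0 _] := rp_params.
have lb : 0 < Num.sqrt rho * nr by rewrite mulr_gt0 ?sqrtr_gt0 ?ltr0n.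
rewrite -cards_eq0 -lt0n -(ltr0n R); case: p => [i|j] /=.
  by case: (rp_D2 i) => h _ _; apply: lt_le_trans h.
case: (rp_D3 j) => _ [h _] _ _ _; apply: lt_le_trans (le_trans h _) => //.
by rewrite ler_nat subset_leq_card // subsetUl.
Qed.

(* (D6) with rho^(1/3) <= 1: there are at most 2n/D parts. *)
Lemma rp_num_parts : (0 < D)%N -> (k + l)%:R * D%:R <= 2 * nr.
Proof.
move=> D0; have [r0 [rn [nt t1]]] := rp_params.
have D0' : 0 < D%:R :> R by rewrite ltr0n.
have r1 : 0 < rho <= 1 by rewrite r0 /=; lra.
have r3 : rho `^ 3%:R^-1 <= 1.
  by rewrite -[leRHS](powRr0 rho); apply: ger_powR; rewrite ?invr_ge0.
have h := le_trans rp_D6 (floor_le _).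
have {}h : (k + 2 * l)%:R <= 2 * nr / D%:R.
  apply: le_trans h _; rewrite ler_pM2r ?invr_gt0 // ler_wpM2r //; lra.
rewrite ler_pdivlMr // in h; apply: le_trans h; rewrite ler_wpM2r // ler_nat.
by rewrite leq_add2l leq_pmull.
Qed.

(* The vertex degree D splits over the k + l parts, the own part taking the
   largest share (D4); with rp_num_parts this gives minimum degree
   alpha^2 n / 2 inside every part when D >= alpha n. *)
Lemma rp_min_degree (alpha : R) : regular e D -> (0 < n)%N -> 0 < alpha ->
  alpha * nr <= D%:R -> forall p, min_deg_ge e (P p) (alpha * alpha / 2 * nr).
Proof.
move=> reg n0 a0 hD p x xp.
have nr0 : 0 < nr by rewrite ltr0n.
have D0 : (0 < D)%N by rewrite -(ltr0n R); apply: lt_le_trans hD; rewrite mulr_gt0.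
have hK := rp_num_parts D0.
have hDx : (D <= (k + l) * deg_in e (P p) x)%N.
  rewrite -(reg x) (deg_in_partition _ _ rp_disjoint rp_cover).
  have own : (\sum_q deg_in e (P q) x <= \sum_(q : 'I_k + 'I_l) deg_in e (P p) x)%N.
    by apply: leq_sum => q _; apply: rp_D4.
  by apply: leq_trans own _; rewrite sum_nat_const card_sum !card_ord mulnC.
move: hDx hK; rewrite -(ler_nat R) natrM.
set d := (deg_in e (P p) x)%:R; set K := (k + l)%:R => hDx hK.
have q1 : alpha * nr * D%:R <= D%:R * D%:R by rewrite ler_wpM2r.
have q2 : D%:R * D%:R <= K * d * D%:R by rewrite ler_wpM2r.
have q3 : K * d * D%:R <= 2 * nr * d by rewrite mulrAC ler_wpM2r.
have q4 : alpha * D%:R <= 2 * d.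
  by rewrite -(ler_pM2r nr0); have := le_trans q1 (le_trans q2 q3); rewrite mulrAC; lra.
have : alpha * (alpha * nr) <= alpha * D%:R by rewrite ler_wpM2l // ltW.
have -> : alpha * alpha / 2 * nr = alpha * (alpha * nr) / 2 by field.
lra.
Qed.

(* Edges leaving the part p (of the kind bounded in (D2), (D3)). *)
Definition rp_boundary (p : 'I_k + 'I_l) : {set {set T}} :=
  match p with
  | inl i => Eset e (Vs i) (~: Vs i)
  | inr j => Eset e (As j) (~: Bs j) :|: Eset e (Bs j) (~: As j)
  end.

(* An edge between different parts leaves the part of either end. *)
Lemma rp_cross_edges : (cross_part_edges e P)%:R <= (k + l)%:R * (rho * nr ^+ 2).
Proof.
rewrite /cross_part_edges; set C := [set _ : {set T} | _].
have sub : C \subset \bigcup_(p in [set: 'I_k + 'I_l]) rp_boundary p.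
  apply/subsetP => s; rewrite inE => /existsP [x /existsP [y /and3P [/eqP -> exy]]].
  have [q xq] := rp_cover x; move=> /forallP /(_ q); rewrite xq /= => yq.
  apply/bigcupP; exists q; rewrite ?inE //.
  case: q xq yq => [i|j] /= xq yq; rewrite !inE.
    by apply/existsP; exists x; apply/existsP; exists y; rewrite eqxx exy xq inE yq.
  move: yq; rewrite inE negb_or => /andP [yA yB].
  case/setUP: xq => [xA|xB]; apply/orP; [left|right]; apply/existsP; exists x;
    by apply/existsP; exists y; rewrite eqxx exy ?xA ?xB !inE ?yA ?yB.
have bd p : #|rp_boundary p|%:R <= rho * nr ^+ 2.
  case: p => [i|j] /=; first by case: (rp_D2 i).
  case: (rp_D3 j) => _ _ _ h _; apply: le_trans h; rewrite ler_nat.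
  exact: leq_card_setU.
apply: le_trans (_ : (\sum_(p in [set: 'I_k + 'I_l]) #|rp_boundary p|)%:R <= _).
  by rewrite ler_nat; apply: leq_trans (subset_leq_card sub) (card_big_setU _ _ _).
rewrite natr_sum; apply: le_trans (ler_sum _ (fun p _ => bd p)) _.
by rewrite sumr_const cardsT card_sum !card_ord mulr_natl.
Qed.

(* (a) for a clustering: with D >= alpha n there are at most 2 / alpha parts,
   so the crossing edges number at most 2 rho n^2 / alpha <= eta n^2. *)
Lemma rp_few_cross_edges (alpha eta : R) : (0 < n)%N -> 0 < alpha ->
  alpha * nr <= D%:R -> 2 * rho <= alpha * eta ->
  (cross_part_edges e P)%:R <= eta * nr ^+ 2.
Proof.
move=> n0 a0 hD he; have [r0 _] := rp_params.
have nr0 : 0 < nr by rewrite ltr0n.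
apply: le_trans rp_cross_edges _; rewrite mulrA ler_pM2r ?exprn_gt0 //.
have D0 : (0 < D)%N by rewrite -(ltr0n R); apply: lt_le_trans hD; rewrite mulr_gt0.
have hK : (k + l)%:R * (alpha * nr) <= 2 * nr.
  by apply: le_trans (rp_num_parts D0); rewrite ler_wpM2l.
rewrite mulrA ler_pM2r // in hK.
rewrite -(ler_pM2r a0) mulrAC; apply: le_trans (_ : 2 * rho <= _).
  by rewrite ler_wpM2r // ltW.
by rewrite [eta * _]mulrC.
Qed.

Lemma rp_bipartite_part j : (eG e (As j) (As j))%:R <= rho * nr ^+ 2 /\
  #|Bs j|%:R <= #|As j|%:R + rho * nr.
Proof.
case: (rp_D3 j) => dAB _ habs hE _; split; last by have := ler_distlCBl habs; lra.
apply: le_trans hE; rewrite ler_nat; apply: leq_trans (leq_addr _ _).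
apply/subset_leq_card/Eset_mono => //.
by apply/subsetP => x xA; rewrite inE (disjointFr dAB xA).
Qed.

End RobustPartition.

Record clustering_params (R : realType)
    (rho nu tau alpha zeta delta gamma beta eta : R) : Prop := ClusteringParams {
  cp_alpha : 0 < alpha;
  cp_delta : 0 < delta /\ delta <= 1;
  cp_delta_alpha : delta <= alpha * alpha / 2;
  cp_tau : tau <= delta / 4;
  cp_rho_nu_delta : 8 * rho <= nu * nu * (delta * delta) /\ 2 * rho <= nu * delta;
  cp_zeta : 0 <= zeta /\ zeta * 16 < delta * delta /\ zeta * 2 < nu * nu;
  cp_gamma : gamma * 2 < nu * nu * (delta * delta) /\ gamma * 8 < delta * delta;
  cp_beta : rho <= beta;
  cp_eta : 2 * rho <= alpha * eta
}.

Lemma robust_partition_is_clustering (R : realType) (T : finType) (e : rel T)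
    (n D k l : nat) (rho nu tau alpha zeta delta gamma beta eta : R)
    (Vs : 'I_k -> {set T}) (As Bs : 'I_l -> {set T}) :
  clustering_params rho nu tau alpha zeta delta gamma beta eta ->
  (0 < n)%N -> simple_graph e -> #|T| = n -> regular e D -> alpha * n%:R <= D%:R ->
  robust_partition e n D rho nu tau Vs As Bs ->
  clustering e n D alpha (rp_part Vs As Bs) (@rp_spec T k l As Bs)
    zeta delta gamma beta eta.
Proof.
case=> a0 [d0 d1] hda htd [hr1 hr2] [z0 [hz1 hz2]] [hg1 hg2] hb he.
move=> n0 [esym eirr] cardT reg hD RP.
have [r0 [rn [nt t1]]] := rp_params RP.
have hzd : zeta < delta / 2.
  have : delta * delta <= delta * 1 by rewrite ler_wpM2l // ltW.
  lra.
have small (S : {set T}) : (#|S| <= n)%N by rewrite -cardT max_card.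
have mindeg p : min_deg_ge e (rp_part Vs As Bs p) (delta * n%:R).
  move=> x xp; apply: le_trans (rp_min_degree RP reg n0 a0 hD xp).
  by rewrite ler_wpM2r.
split=> //; split.
  split; [exact: rp_disjoint RP | split; [exact: rp_cover RP | ]].
  by move=> p; exact: rp_nonempty RP p n0.
split; first exact: (rp_few_cross_edges RP n0 a0 hD he).
split; first exact: mindeg.
split.
  case=> [i|j] X1 X2 cut /=.
    case: (rp_D2 RP i) => _ _ exp.
    apply: (expander_no_sparse_cut esym z0 hzd _ _ _ _ (small _) exp (mindeg (inl i)) cut);
      lra.
  case: (rp_D3 RP j) => dAB _ _ _ bexp; have [eAA hBA] := rp_bipartite_part RP j.
  apply: (bip_expander_no_sparse_cut esym eirr dAB n0 z0 _ d0 d1 _ htd hr1 hr2 hz1 hz2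
    (small _) bexp (rp_D5 RP (j := j)) (mindeg (inr j)) eAA hBA cut); lra.
case=> [i|j] /=.
  case: (rp_D2 RP i) => _ _ exp.
  apply: (expander_far_from_bipartite esym eirr _ _ d0 d1 _ hg1 hg2
    (rp_nonempty RP (inl i) n0) (small _) exp (mindeg (inl i))); lra.
case: (rp_D3 RP j) => dAB _ _ hE _.
exact: (bipartite_part_almost_bipartite esym dAB hE hb).
Qed.

Section NondecreasingUnitFunctions.
Variable R : realType.

Lemma unit_nondecr_id : unit_nondecr (fun x : R => x).
Proof. by split. Qed.

Lemma unit_nondecr_comp (f g : R -> R) : unit_nondecr f -> unit_nondecr g ->
  unit_nondecr (fun x => f (g x)).
Proof.
move=> [f1 f2] [g1 g2]; split=> [x hx|x y hx hy hxy]; first exact/f1/g1.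
by apply: f2; [apply: g1 | apply: g1 | apply: g2].
Qed.

Lemma unit_nondecr_min (f g : R -> R) : unit_nondecr f -> unit_nondecr g ->
  unit_nondecr (fun x => Num.min (f x) (g x)).
Proof.
move=> [f1 f2] [g1 g2]; split=> [x hx|x y hx hy hxy].
  have /andP [a1 a2] := f1 x hx; have /andP [b1 b2] := g1 x hx.
  by rewrite /in01 lt_min a1 b1 gt_min a2.
by rewrite le_min !ge_min (f2 x y hx hy hxy) (g2 x y hx hy hxy) orbT.
Qed.

Lemma unit_nondecr_mul (f g : R -> R) : unit_nondecr f -> unit_nondecr g ->
  unit_nondecr (fun x => f x * g x).
Proof.
move=> [f1 f2] [g1 g2]; split=> [x hx|x y hx hy hxy].
  have /andP [a1 a2] := f1 x hx; have /andP [b1 b2] := g1 x hx.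
  by rewrite /in01 mulr_gt0 //= mulr_ilt1 ?ltW.
have /andP [a1 _] := f1 x hx; have /andP [b1 _] := g1 x hx.
by apply: ler_pM; [apply: ltW | apply: ltW | apply: f2 | apply: g2].
Qed.

Lemma unit_nondecr_div (f : R -> R) (c : R) : 1 <= c -> unit_nondecr f ->
  unit_nondecr (fun x => f x / c).
Proof.
move=> c1 [f1 f2]; have c0 : 0 < c by lra.
split=> [x hx|x y hx hy hxy]; last by rewrite ler_pM2r ?invr_gt0 ?f2.
have /andP [a1 a2] := f1 x hx.
by rewrite /in01 divr_gt0 //= ltr_pdivrMr // mul1r (lt_le_trans a2).
Qed.

Lemma unit_nondecr_exp (k : nat) : unit_nondecr (fun x : R => x ^+ k.+1).
Proof.
elim: k => [|k IH]; first by split=> // x; rewrite expr1.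
have [h1 h2] := unit_nondecr_mul unit_nondecr_id IH.
split=> [x hx|x y hx hy hxy]; first by rewrite exprS; apply: h1.
by rewrite (exprS x) (exprS y); apply: h2.
Qed.

End NondecreasingUnitFunctions.

Section ParameterChoice.
Variables (R : realType) (f : R -> R).
Hypothesis uf : unit_nondecr f.

(* The clustering parameters as functions of nu: each is below f of the next
   one (as the theorem requires) and below the power of nu that the graph
   argument needs. *)
Definition zeta_fn (x : R) : R := Num.min (f x) (x ^+ 4 / 128).
Definition gamma_fn (x : R) : R := Num.min (f (zeta_fn x)) (x ^+ 6 / 16).
Definition beta_fn (x : R) : R := f (gamma_fn x).
Definition eta_fn (x : R) : R := f (beta_fn x).

(* rho <= rho_bound nu is what the argument needs of rho; tau <= alpha^2 / 8
   is what it needs of tau; f x / 2 keeps f' below f. *)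
Definition rho_bound (x : R) : R :=
  Num.min (Num.min (f (eta_fn x)) (x * eta_fn x / 2)) (Num.min (beta_fn x) (x ^+ 6 / 64)).
Definition f_prime (x : R) : R :=
  Num.min (rho_bound x) (Num.min (x ^+ 2 / 8) (f x / 2)).

Lemma parameter_fns_nondecr :
  [/\ unit_nondecr zeta_fn, unit_nondecr gamma_fn, unit_nondecr beta_fn,
      unit_nondecr eta_fn & unit_nondecr f_prime].
Proof.
have c1 (c : nat) : (0 < c)%N -> 1 <= c%:R :> R by move=> c0; rewrite ler1n.
have pow k c : (0 < c)%N -> unit_nondecr (fun x : R => x ^+ k.+1 / c%:R).
  by move=> c0; apply/unit_nondecr_div/unit_nondecr_exp/c1.
have uz : unit_nondecr zeta_fn by apply: unit_nondecr_min uf (pow 3 128%N _).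
have ug : unit_nondecr gamma_fn.
  by apply: unit_nondecr_min (unit_nondecr_comp uf uz) (pow 5 16%N _).
have ub : unit_nondecr beta_fn by apply: unit_nondecr_comp uf ug.
have ue : unit_nondecr eta_fn by apply: unit_nondecr_comp uf ub.
split=> //; apply: unit_nondecr_min; apply: unit_nondecr_min.
- apply: unit_nondecr_min; first exact: unit_nondecr_comp uf ue.
  exact/(unit_nondecr_div (c1 2%N _))/(unit_nondecr_mul (unit_nondecr_id R) ue).
- exact: unit_nondecr_min ub (pow 5 64%N _).
- exact: pow 1 8%N _.
- exact: unit_nondecr_div (c1 2%N _) uf.
Qed.

Lemma f_prime_lt x : in01 x -> f_prime x < f x.
Proof.
move=> hx; have /andP [fx0 _] := uf.1 x hx.
have : f_prime x <= f x / 2 by rewrite /f_prime !ge_min lexx !orbT.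
lra.
Qed.

(* With delta = alpha^2 / 2 the chosen parameters satisfy the relations of
   clustering_params; all estimates come from nu <= tau <= alpha^2 / 8. *)
Lemma chosen_params_admissible (rho nu tau alpha : R) :
  in01 nu -> in01 alpha -> rho <= f_prime nu -> nu <= tau -> tau <= f_prime alpha ->
  clustering_params rho nu tau alpha (zeta_fn nu) (alpha * alpha / 2)
    (gamma_fn nu) (beta_fn nu) (eta_fn nu).
Proof.
move=> hnu /andP [a0 a1] hrho hnt htau; have /andP [nu0 nu1] := hnu.
have [uz ug _ ue _] := parameter_fns_nondecr.
move: hrho; rewrite /f_prime /rho_bound !le_min.
move=> /andP [/andP [/andP [_ h2] /andP [h3 h4]] _].
move: htau; rewrite /f_prime !le_min expr2 => /andP [_ /andP [ta _]].
have /andP [z0 _] := uz.1 nu hnu; have /andP [e0 _] := ue.1 nu hnu.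
have z1 : zeta_fn nu <= nu ^+ 4 / 128 by rewrite /zeta_fn ge_min lexx orbT.
have g1 : gamma_fn nu <= nu ^+ 6 / 16 by rewrite /gamma_fn ge_min lexx orbT.
move: z1 g1 h4; set q := nu * nu.
have -> : nu ^+ 4 = q * q by rewrite /q; ring.
have -> : nu ^+ 6 = q * q * q by rewrite /q; ring.
move=> z1 g1 h4.
set delta := alpha * alpha / 2.
have aa : alpha * alpha < alpha by rewrite -[ltRHS]mulr1 ltr_pM2l.
have nua : nu <= alpha by lra.
have q0 : 0 < q by rewrite mulr_gt0.
have qd : q / 2 <= delta by rewrite ler_pM2r // ler_pM // ltW.
have q1 : q <= nu / 8 by apply: ler_wpM2l; [exact: ltW | lra].
have qq1 : q * q <= q * (1 / 64) by apply: ler_wpM2l; [exact: ltW | lra].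
have dd : q * q / 4 <= delta * delta.
  have -> : q * q / 4 = q / 2 * (q / 2) by field.
  by apply: ler_pM => //; lra.
have qdd : q * (q * q / 4) <= q * (delta * delta) by apply: ler_wpM2l; [exact: ltW | exact: dd].
have qq0 : 0 < q * q by rewrite mulr_gt0.
have qqq : q * q * q <= q * q * (1 / 64) by apply: ler_wpM2l; [exact: ltW | lra].
have qqn : q * q * q <= nu * q by apply: ler_wpM2r; [exact: ltW | lra].
have nd : nu * (q / 2) <= nu * delta by apply: ler_wpM2l; [exact: ltW | lra].
have ea : nu * eta_fn nu <= alpha * eta_fn nu by apply: ler_wpM2r; [exact: ltW | lra].
have eq3 : q * (q * q / 4) = q * q * q / 4 by ring.
have A0 : 0 < alpha * alpha by rewrite mulr_gt0.
have dA : delta = alpha * alpha / 2 by [].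
have Q0 : 0 < q * q * q by rewrite !mulr_gt0.
have eq1 : nu * (q / 2) = nu * q / 2 by ring.
by split; rewrite // -/q; repeat split; lra.
Qed.

Lemma chosen_params_hierarchy (rho nu : R) : in01 nu -> rho <= f_prime nu ->
  [/\ in01 (zeta_fn nu), in01 (gamma_fn nu), in01 (beta_fn nu) & in01 (eta_fn nu)] /\
  [/\ rho <= f (eta_fn nu), eta_fn nu <= f (beta_fn nu), beta_fn nu <= f (gamma_fn nu),
      gamma_fn nu <= f (zeta_fn nu) & zeta_fn nu <= f nu].
Proof.
move=> hnu hrho; have [uz ug ub ue _] := parameter_fns_nondecr.
split; first by split; [exact: uz.1 | exact: ug.1 | exact: ub.1 | exact: ue.1].
split=> //; last by rewrite /zeta_fn ge_min lexx.
  by move: hrho; rewrite /f_prime /rho_bound !le_min => /andP [/andP [/andP [] ]].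
by rewrite /gamma_fn ge_min lexx.
Qed.

Lemma chosen_delta (tau alpha : R) : in01 alpha -> 0 < tau -> tau <= f_prime alpha ->
  in01 (alpha * alpha / 2) /\ tau < alpha * alpha / 2 < alpha.
Proof.
move=> /andP [a0 a1] t0; rewrite /f_prime !le_min expr2 => /andP [_ /andP [ta _]].
have aa : alpha * alpha < alpha by rewrite -[ltRHS]mulr1 ltr_pM2l.
by split; apply/andP; split; lra.
Qed.

End ParameterChoice.

(* The theorem keeps all of its binders explicit, as in its statement. *)
Unset Implicit Arguments.
Theorem mainTheorem17 (R : realType) (f : R -> R) :
  unit_nondecr f ->
  exists f' : R -> R,
    unit_nondecr f' /\ (forall x, in01 x -> f' x < f x) /\
    forall (rho nu tau alpha : R) (n k l : nat),
      in01 rho -> in01 nu -> in01 tau -> in01 alpha -> (0 < n)%N ->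
      n%:R^-1 <= rho -> rho <= f' nu -> nu <= tau -> tau <= f' alpha ->
      exists zeta delta gamma beta eta : R,
        [/\ in01 zeta, in01 delta, in01 gamma, in01 beta & in01 eta] /\
        [/\ rho <= f eta, eta <= f beta, beta <= f gamma, gamma <= f zeta
           & zeta <= f nu] /\ tau < delta < alpha /\
        forall (T : finType) (e : rel T) (D : nat),
          simple_graph e -> #|T| = n -> regular e D -> alpha * n%:R <= D%:R ->
          forall (Vs : 'I_k -> {set T}) (As Bs : 'I_l -> {set T}),
            robust_partition e n D rho nu tau Vs As Bs ->
            clustering e n D alpha (rp_part Vs As Bs) (@rp_spec T k l As Bs)
              zeta delta gamma beta eta.
Proof.
move=> uf; have [_ _ _ _ uf'] := parameter_fns_nondecr uf.
exists (f_prime f); split=> //; split=> [x|]; first exact: f_prime_lt.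
move=> rho nu tau alpha n k l _ hnu /andP [t0 _] ha n0 _ hrho hnt htau.
have [[iz ig ib ie] hier] := chosen_params_hierarchy uf hnu hrho.
have [id hd] := chosen_delta ha t0 htau.
have params := chosen_params_admissible uf hnu ha hrho hnt htau.
exists (zeta_fn f nu), (alpha * alpha / 2), (gamma_fn f nu), (beta_fn f nu), (eta_fn f nu).
do 3 split=> //.
move=> T e D sg cardT reg hD Vs As Bs RP.
exact: robust_partition_is_clustering params n0 sg cardT reg hD RP.
Qed.
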